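(* For the two-species competition model on $\mathbb{Z}$ (i.e. $d=1$), for every nondegenerate finite initial configuration ($R(0)$, $B(0)$ finite, disjoint, both nonempty), the event $\{R(t)\ne\emptyset\text{ and }B(t)\ne\emptyset\text{ for all }t\ge0\}$ of mutual survival has positive probability.
   Context: The two-species competition model on $\mathbb{Z}^d$ is the continuous-time Markov process $(R(t),B(t))_{t\ge0}$ whose state is a pair of disjoint subsets of $\mathbb{Z}^d$ ($R(t)$: Red sites, $B(t)$: Blue sites; other sites unoccupied). An unoccupied site becomes Red at rate equal to its number of Red nearest neighbours and Blue at rate equal to its number of Blue nearest neighbours; an occupied site flips to the opposite colour at rate equal to its number of nearest neighbours of the opposite colour; occupied sites never become unoccupied. *)

From HB Require Import structures.
From mathcomp Require Import all_boot all_order all_algebra.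
From mathcomp Require Import finmap.
Set Implicit Arguments.
Unset Strict Implicit.
Unset Printing Implicit Defensive.
Import Order.TTheory GRing.Theory Num.Theory.
Local Open Scope fset_scope.
Local Open Scope ring_scope.

(* A configuration: (Red sites, Blue sites), finite subsets of Z. *)
Definition config := ({fset int} * {fset int})%type.

(* colours: true = Red, false = Blue *)
Definition col_set (s : config) (c : bool) : {fset int} :=
  if c then s.1 else s.2.

Definition nb (A : {fset int}) (x : int) : nat :=
  ((x - 1) \in A) + ((x + 1) \in A).

Definition rate (s : config) (x : int) (c : bool) : nat :=
  if x \in col_set s c then 0%N else nb (col_set s c) x.

Definition update (s : config) (x : int) (c : bool) : config :=
  if c then (x |` s.1, s.2 `\ x) else (s.1 `\ x, x |` s.2).

(* every site with positive rate is a neighbour of an occupied site *)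
Definition cand (s : config) : seq int :=
  undup [seq (x + d)%R | x <- enum_fset (s.1 `|` s.2), d <- [:: -1; 1]].

Definition totrate (s : config) : nat :=
  (\sum_(x <- cand s) \sum_(c <- [:: true; false]) rate s x c)%N.

Definition nondeg (s : config) : bool := (s.1 != fset0) && (s.2 != fset0).

(* surv n s = probability that the embedded jump chain started at s has both
   colours present at each of its first n+1 states (steps 0..n). *)
Fixpoint surv (n : nat) (s : config) : rat :=
  match n with
  | 0%N => if nondeg s then 1 else 0
  | n'.+1 =>
      if nondeg s then
        \sum_(x <- cand s) \sum_(c <- [:: true; false])
          ((rate s x c)%:R / (totrate s)%:R) * surv n' (update s x c)
      else 0
  end.

From HB Require Import structures.
From mathcomp Require Import all_boot all_order all_algebra.
From mathcomp Require Import finmap zify ring lra.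
Import Order.TTheory GRing.Theory Num.Theory.
Set Implicit Arguments.
Unset Strict Implicit.
Local Open Scope fset_scope.
Local Open Scope ring_scope.

(* Each colour is protected by an edge run: a block of one colour at an end
   of the occupied interval.  The left-most run of colour c grows at rate 1 at
   its outer end, grows at rate q at its inner end and shrinks at rate q, where
   q <= 1 says whether the next site inward has the other colour.  Since
   q/(1+q) <= 1/2, the potential 2^-a of a run of length a cannot increase in
   expectation along a jump, so a run of length a is wiped out with probability
   at most 2^-a.  With a red run of length a at one end and a blue run of
   length b at the other, both colours survive n jumps with probability at
   least 1 - 2^-a - 2^-b, by induction on n.  Finally, any nondegenerate
   configuration reaches one with a = 1 and b = 2 with positive probability,
   by painting sites to the right of an opposite-coloured site one at a time. *)

Lemma eqNbb (b : bool) : (~~ b == b) = false. Proof. by case: b. Qed.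
Lemma eqbNb (b : bool) : (b == ~~ b) = false. Proof. by case: b. Qed.
Lemma neq_negb (b1 b2 : bool) : b1 != b2 -> b1 = ~~ b2. Proof. by case: b1; case: b2. Qed.

Definition sites (s : config) : {fset int} := s.1 `|` s.2.

Definition valid_config (s : config) : bool := [disjoint s.1 & s.2]%fset.

Lemma col_set_sites s c x : x \in col_set s c -> x \in sites s.
Proof. by case: c; rewrite inE => ->; rewrite ?orbT. Qed.

Lemma col_setN s c x : valid_config s -> x \in col_set s c -> x \notin col_set s (~~ c).
Proof.
by move=> /fdisjointP vs; case: c => /= [/vs //|]; apply: contraL => /vs.
Qed.

Lemma col_set_update s x c c' y :
  (y \in col_set (update s x c) c') =
  if c == c' then (y == x) || (y \in col_set s c') else (y != x) && (y \in col_set s c').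
Proof. by case: c; case: c'; rewrite !inE. Qed.

Lemma sites_update s x c : sites (update s x c) = x |` sites s.
Proof.
apply/fsetP => y; rewrite !inE.
by case: c; rewrite !inE; case: (y == x); case: (y \in s.1); case: (y \in s.2).
Qed.

Lemma valid_update s x c : valid_config s -> valid_config (update s x c).
Proof.
move=> /fdisjointP vs; apply/fdisjointP => y; case: c; rewrite /= !inE.
  by case: (y == x) => //= /vs.
by case/andP=> /negbTE -> /vs.
Qed.

Lemma nondeg_of_col s c x y : x \in col_set s c -> y \in col_set s (~~ c) -> nondeg s.
Proof.
by case: c => /= x_col y_col; apply/andP; split; apply/fset0Pn; eexists; eassumption.
Qed.

Lemma nb_sym (A : {fset int}) x d : d = 1 \/ d = -1 ->
  nb A x = addn (x - d \in A) (x + d \in A).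
Proof. by case=> ->; rewrite /nb // opprK addnC. Qed.

Lemma rate_gt0_cand s x c : (0 < rate s x c)%N -> x \in cand s.
Proof.
rewrite /rate /cand mem_undup; case: ifP => // _.
have pair_in y e : y \in col_set s c -> e \in [:: -1; 1] -> y + e \in
  [seq y + d | y <- enum_fset (s.1 `|` s.2), d <- [:: -1; 1]].
  move=> /col_set_sites y_site e_unit; exact: (allpairs_f (fun y d => y + d) y_site e_unit).
rewrite /nb; case: (boolP (x - 1 \in _)) => [left_col _|_ right_col].
  by rewrite -(subrK 1 x) pair_in // !inE eqxx.
by rewrite -(addrK 1 x) pair_in // ?inE ?eqxx ?orbT; case: (x + 1 \in _) right_col.
Qed.

Definition rate_sum s (F : int -> bool -> rat) : rat :=
  \sum_(x <- cand s) \sum_(c <- [:: true; false]) (rate s x c)%:R * F x c.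

Definition survives (s : config) : Prop :=
  exists c : rat, 0 < c /\ forall n, c <= surv n s.

Lemma sum_colours (F : bool -> rat) c :
  \sum_(c' <- [:: true; false]) F c' = F c + F (~~ c).
Proof. by rewrite !big_cons big_nil addr0; case: c; rewrite // addrC. Qed.

Lemma rate_sum_const s r : rate_sum s (fun _ _ => r) = (totrate s)%:R * r.
Proof.
rewrite /totrate natr_sum mulr_suml; apply: eq_bigr => x _; rewrite natr_sum mulr_suml.
by apply: eq_bigr.
Qed.

Lemma rate_sumB s F G :
  rate_sum s (fun x c => F x c - G x c) = rate_sum s F - rate_sum s G.
Proof.
rewrite /rate_sum -sumrB; apply: eq_bigr => x _; rewrite -sumrB.
by apply: eq_bigr => c _; rewrite mulrBr.
Qed.

Lemma ler_rate_sum s F G : (forall x c, (0 < rate s x c)%N -> F x c <= G x c) ->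
  rate_sum s F <= rate_sum s G.
Proof.
move=> FG; apply: ler_sum => x _; apply: ler_sum => c _.
by case: (posnP (rate s x c)) => [->|/FG ?]; rewrite ?mul0r // ler_wpM2l.
Qed.

Lemma rate_sum_ge_term s F x c : (forall y c', 0 <= F y c') ->
  (rate s x c)%:R * F x c <= rate_sum s F.
Proof.
move=> F_ge0; have term_ge0 y c' : 0 <= (rate s y c')%:R * F y c' by rewrite mulr_ge0.
have [->|/rate_gt0_cand x_cand] := posnP (rate s x c).
  by rewrite mul0r sumr_ge0 // => y _; apply: sumr_ge0.
rewrite /rate_sum (bigD1_seq x) ?undup_uniq //= (sum_colours (fun c' => _ * F x c') c).
by rewrite -addrA lerDl addr_ge0 // sumr_ge0 // => y _; apply: sumr_ge0.
Qed.

Lemma rate_le_totrate s x c : (rate s x c <= totrate s)%N.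
Proof.
have := @rate_sum_ge_term s (fun _ _ => 1) x c.
by rewrite rate_sum_const !mulr1 ler_nat; apply.
Qed.

Lemma survSE n s : nondeg s ->
  surv n.+1 s = (totrate s)%:R^-1 * rate_sum s (fun x c => surv n (update s x c)).
Proof.
move=> nd; rewrite /= nd /rate_sum mulr_sumr; apply: eq_bigr => x _; rewrite mulr_sumr.
by apply: eq_bigr => c _; rewrite mulrA [_^-1 * _]mulrC.
Qed.

Lemma surv_ge0 n s : 0 <= surv n s.
Proof.
elim: n s => [|n IH] s /=; case: (nondeg s) => //.
by apply: sumr_ge0 => x _; apply: sumr_ge0 => c _; rewrite mulr_ge0 ?divr_ge0.
Qed.

Lemma surv_step n s x c : nondeg s ->
  (rate s x c)%:R / (totrate s)%:R * surv n (update s x c) <= surv n.+1 s.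
Proof.
move=> nd; rewrite survSE // mulrAC mulrC ler_wpM2l ?invr_ge0 //.
by rewrite rate_sum_ge_term // => y c'; apply: surv_ge0.
Qed.

Lemma survives_step s x c : nondeg s -> (0 < rate s x c)%N ->
  survives (update s x c) -> survives s.
Proof.
move=> nd rate_gt0 [C [C_gt0 C_le]].
have tot_gt0 : (0 < totrate s)%N := leq_trans rate_gt0 (rate_le_totrate s x c).
exists ((rate s x c)%:R / (totrate s)%:R * C); split.
  by rewrite !mulr_gt0 ?invr_gt0 ?ltr0n.
case=> [|n]; last by apply: le_trans (surv_step n x c nd); rewrite ler_wpM2l ?divr_ge0.
rewrite /= nd; apply: mulr_ile1; rewrite ?divr_ge0 ?(ltW C_gt0) //.
- by rewrite ler_pdivrMr ?ltr0n // mul1r ler_nat rate_le_totrate.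
- by apply: le_trans (C_le 0%N) _; rewrite /=; case: nondeg.
Qed.

Definition ruin (a : nat) : rat := 2^-1 ^+ a.

Lemma ruin_ge0 a : 0 <= ruin a.
Proof. by rewrite exprn_ge0. Qed.

Lemma ruinS a : ruin a.+1 = ruin a / 2.
Proof. by rewrite /ruin exprS mulrC. Qed.

Lemma sum_indicator (r : seq int) p (v : rat) : uniq r ->
  \sum_(y <- r) (y == p)%:R * v = (p \in r)%:R * v.
Proof.
elim: r => [|y r IH] /=; first by rewrite big_nil mul0r.
case/andP=> y_notin_r uniq_r; rewrite big_cons IH // in_cons.
have [<-|_] := eqVneq y p; last by rewrite mul0r add0r.
by rewrite (negbTE y_notin_r) mul0r addr0.
Qed.

Section EdgeRun.

Variables (d : int) (c : bool).
Hypothesis unit_d : d = 1 \/ d = -1.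

Definition edge_run s L (a : nat) : Prop :=
  {in sites s, forall x, 0 <= d * (x - L)} /\
  forall k : nat, (k < a)%N -> L + k%:Z * d \in col_set s c.

Definition next_start L x c' : int := if (x == L - d) && (c' == c) then L - d else L.

Definition next_len L a' x c' : nat :=
  if (x == L - d) && (c' == c) then a'.+2
  else if (x == L + a'.+1%:Z * d) && (c' == c) then a'.+2
  else if (x == L + a'%:Z * d) && (c' == ~~ c) then a'
  else a'.+1.

Variables (s : config) (L : int) (a' : nat).
Hypotheses (vs : valid_config s) (run : edge_run s L a'.+1).

Local Notation front := (L + a'.+1%:Z * d).
Local Notation last := (L + a'%:Z * d).

(* Clearing [vs] keeps lia from making lemmas that do not need it depend on it. *)
Ltac unit_lia := case: unit_d => ->; clear vs; lia.

Lemma notin_behind_run x c' : d * (x - L) < 0 -> x \notin col_set s c'.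
Proof. by move=> x_behind; apply/negP => /col_set_sites /run.1; rewrite leNgt x_behind. Qed.

Lemma run_start : L \in col_set s c.
Proof. by have := run.2 0%N isT; rewrite mul0r addr0. Qed.

Lemma rate_behind_run : rate s (L - d) c = 1%N.
Proof.
rewrite /rate (negbTE (notin_behind_run _ _)); last by unit_lia.
rewrite (nb_sym _ _ unit_d) (negbTE (notin_behind_run _ _)); last by unit_lia.
by rewrite subrK run_start.
Qed.

Lemma rate_behind_runN : rate s (L - d) (~~ c) = 0%N.
Proof.
rewrite /rate (negbTE (notin_behind_run _ _)); last by unit_lia.
rewrite (nb_sym _ _ unit_d) (negbTE (notin_behind_run _ _)); last by unit_lia.
by rewrite subrK (negbTE (col_setN vs run_start)).
Qed.

Lemma rate_insideN k : (k < a')%N -> rate s (L + k%:Z * d) (~~ c) = 0%N.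
Proof.
move=> lt_k_a; rewrite /rate (negbTE (col_setN vs (run.2 k (ltnW lt_k_a)))).
rewrite (nb_sym _ _ unit_d).
have -> : L + k%:Z * d + d = L + k.+1%:Z * d by unit_lia.
rewrite (negbTE (col_setN vs (run.2 k.+1 _))) // addn0.
case: k lt_k_a => [|k] lt_k_a.
  by rewrite (negbTE (notin_behind_run _ _)) //; unit_lia.
have -> : L + k.+1%:Z * d - d = L + k%:Z * d by unit_lia.
by rewrite (negbTE (col_setN vs (run.2 k _))) // ltnW // ltnW.
Qed.

Lemma rate_last_runN : rate s last (~~ c) = (front \in col_set s (~~ c)) :> nat.
Proof.
rewrite /rate (negbTE (col_setN vs (run.2 a' (ltnSn _)))) (nb_sym _ _ unit_d).
have -> : last + d = front by unit_lia.
case: a' run => [|a''] run'.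
  by rewrite (negbTE (notin_behind_run _ _)) //; unit_lia.
have -> : L + a''.+1%:Z * d - d = L + a''%:Z * d by unit_lia.
by rewrite (negbTE (col_setN vs (run'.2 a'' _))) // ltnW.
Qed.

Lemma rate_front_run : leq (front \in col_set s (~~ c)) (rate s front c).
Proof.
case front_opp: (_ \in col_set s (~~ c)) => //.
rewrite /rate; have := col_setN vs front_opp; rewrite negbK => /negbTE ->.
rewrite (nb_sym _ _ unit_d).
have -> : front - d = last by unit_lia.
by rewrite run.2.
Qed.

Lemma rate_gt0_ahead x c' : (0 < rate s x c')%N ->
  ((x == L - d) && (c' == c)) || (0 <= d * (x - L)).
Proof.
move=> rate_gt0; have [_|x_behind] := lerP 0 (d * (x - L)); first by rewrite orbT.
have x_back : x = L - d.
  move: rate_gt0; rewrite /rate; case: ifP => // _; rewrite (nb_sym _ _ unit_d).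
  have nb_ahead y : y \in col_set s c' -> 0 <= d * (y - L) by move/col_set_sites/run.1.
  case: (boolP (x - d \in _)) => [/nb_ahead|_]; first by move: x_behind; unit_lia.
  by case: (boolP (x + d \in _)) => // /nb_ahead; move: x_behind; unit_lia.
move: rate_gt0; rewrite x_back eqxx /=; case: eqP => // /eqP /neq_negb ->.
by rewrite rate_behind_runN.
Qed.

Lemma edge_run_update x c' : (0 < rate s x c')%N ->
  edge_run (update s x c') (next_start L x c') (next_len L a' x c').
Proof.
move=> rate_gt0; split.
  rewrite sites_update => z /fset1UP [->|z_site].
    move: (rate_gt0_ahead rate_gt0); rewrite /next_start.
    by case: ifP => [/andP[/eqP -> _] _|_ //]; unit_lia.
  by move: (run.1 z z_site); rewrite /next_start; case: ifP => _; unit_lia.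
move=> k; rewrite /next_len /next_start col_set_update.
case: ifP => [/andP[/eqP-> /eqP->] lt_k|_]; rewrite ?eqxx.
  case: k lt_k => [|k] lt_k; first by rewrite mul0r addr0 eqxx.
  have -> : L - d + k.+1%:Z * d = L + k%:Z * d by unit_lia.
  by rewrite run.2 ?orbT.
case: ifP => [/andP[/eqP-> /eqP->] lt_k|_]; rewrite ?eqxx.
  by move: lt_k; rewrite ltnS leq_eqVlt => /predU1P [->|/run.2 ->]; rewrite ?eqxx ?orbT.
case: ifP => [/andP[/eqP-> /eqP->] lt_k|not_last].
  rewrite eqNbb run.2 ?andbT; last exact: ltnW.
  by apply/eqP; move: lt_k; unit_lia.
move=> lt_k; case: eqP => [_|/eqP /neq_negb c'E]; first by rewrite run.2 ?orbT.
rewrite run.2 ?andbT //; apply: contraTneq rate_gt0 => x_run.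
move: not_last; rewrite -x_run c'E eqxx andbT.
move: lt_k; rewrite ltnS leq_eqVlt => /predU1P [->|k_inside] not_last.
  by rewrite eqxx in not_last.
by rewrite rate_insideN.
Qed.

Local Notation q := ((front \in col_set s (~~ c))%:R : rat).

Lemma ruin_drift_at x :
  \sum_(c' <- [:: true; false]) (rate s x c')%:R * (ruin (next_len L a' x c') - ruin a'.+1)
  <= (x == last)%:R * (2 * q * ruin a'.+2) - (x == front)%:R * (q * ruin a'.+2)
     - (x == L - d)%:R * ruin a'.+2.
Proof.
have back_front : (L - d == front) = false by apply/eqP; unit_lia.
have back_last : (L - d == last) = false by apply/eqP; unit_lia.
have front_last : (front == last) = false by apply/eqP; unit_lia.
have r_ge0 := ruin_ge0 a'.+2; have r1 := ruinS a'.+1; have r0 := ruinS a'.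
rewrite (sum_colours (fun c' => (rate s x c')%:R * _) c) /next_len !eqxx eqNbb eqbNb !andbF !andbT.
have [->|_] := eqVneq x (L - d).
  by rewrite rate_behind_run rate_behind_runN back_front back_last /=; lra.
have [->|_] := eqVneq x front.
  have := rate_front_run; rewrite -(ler_nat rat) front_last /=.
  case: (front \in _) => /=; nra.
have [->|_] := eqVneq x last.
  by rewrite rate_last_runN /=; case: (front \in _) => /=; lra.
by rewrite /=; lra.
Qed.

Lemma ruin_drift :
  rate_sum s (fun x c' => ruin (next_len L a' x c')) <= (totrate s)%:R * ruin a'.+1.
Proof.
rewrite -rate_sum_const -subr_le0 -rate_sumB.
apply: le_trans (ler_sum _ (fun x _ => ruin_drift_at x)) _.
rewrite !sumrB !sum_indicator ?undup_uniq //.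
have -> : L - d \in cand s by apply: (@rate_gt0_cand _ _ c); rewrite rate_behind_run.
have r_ge0 := ruin_ge0 a'.+2.
case: (boolP (front \in _)) => [front_opp|_] /=; last by lra.
have -> : front \in cand s.
  by apply: (@rate_gt0_cand _ _ c); apply: leq_trans rate_front_run; rewrite front_opp.
by case: (last \in cand s) => /=; lra.
Qed.

End EdgeRun.

Lemma ruin_bound_le0 a b : (a == 0%N) || (b == 0%N) -> 1 - ruin a - ruin b <= 0.
Proof.
by case/orP => /eqP->; have := ruin_ge0 a; have := ruin_ge0 b; rewrite /ruin expr0; lra.
Qed.

Lemma surv_ge_ruin n s c L a M b : valid_config s ->
  edge_run 1 c s L a -> edge_run (-1) (~~ c) s M b -> 1 - ruin a - ruin b <= surv n s.
Proof.
have unit1 : (1 : int) = 1 \/ (1 : int) = -1 by left.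
have unitN1 : (-1 : int) = 1 \/ (-1 : int) = -1 by right.
elim: n s L a M b => [|n IH] s L [|a'] M [|b'] vs runL runM;
  try by apply: le_trans (ruin_bound_le0 _) (surv_ge0 _ _).
  have := ruin_ge0 a'.+1; have := ruin_ge0 b'.+1.
  by rewrite /= (nondeg_of_col (run_start runL) (run_start runM)); lra.
have nd := nondeg_of_col (run_start runL) (run_start runM).
have tot_gt0 : 0 < (totrate s)%:R :> rat.
  by rewrite ltr0n (leq_trans _ (rate_le_totrate s (L - 1) c)) // (rate_behind_run unit1 runL).
rewrite survSE // ler_pdivlMl //.
apply: le_trans (_ : _ <= rate_sum s (fun x c' =>
  1 - ruin (next_len 1 c L a' x c') - ruin (next_len (-1) (~~ c) M b' x c'))) _.
  rewrite !rate_sumB rate_sum_const.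
  have := ruin_drift unit1 vs runL; have := ruin_drift unitN1 vs runM; lra.
apply: ler_rate_sum => x c' rate_gt0; apply: IH; first exact: valid_update.
  exact: edge_run_update.
exact: edge_run_update.
Qed.

Lemma fset_min (S : {fset int}) : S != fset0 -> exists2 m, m \in S & {in S, forall x, m <= x}.
Proof.
case/fset0Pn => x0 x0_in.
case: (arg_minP (fun x : S => val x) (isT : xpredT [` x0_in])) => m _ m_min.
by exists (val m) => [|x x_in]; [exact: fsvalP | exact: (m_min [` x_in])].
Qed.

Lemma fset_max (S : {fset int}) : S != fset0 -> exists2 m, m \in S & {in S, forall x, x <= m}.
Proof.
case/fset0Pn => x0 x0_in.
case: (arg_maxP (fun x : S => val x) (isT : xpredT [` x0_in])) => m _ m_max.
by exists (val m) => [|x x_in]; [exact: fsvalP | exact: (m_max [` x_in])].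
Qed.

Lemma rate_next_gt0 s x c : x \notin col_set s c -> x - 1 \in col_set s c -> (0 < rate s x c)%N.
Proof. by rewrite /rate /nb => /negbTE -> ->. Qed.

Lemma edge_run_paint_right s c L y : edge_run 1 c s L 1 -> y \in sites s ->
  edge_run 1 c (update s (y + 1) (~~ c)) L 1.
Proof.
move=> [ahead L_col] y_site; have := ahead y y_site; rewrite mul1r => L_le_y.
split; first by rewrite sites_update => z /fset1UP [->|/ahead]; lia.
by case=> // _; rewrite col_set_update eqNbb L_col // andbT; apply/eqP; lia.
Qed.

Lemma survives_paint_right s c L y : edge_run 1 c s L 1 -> y \in col_set s (~~ c) ->
  y + 1 \notin col_set s (~~ c) -> survives (update s (y + 1) (~~ c)) -> survives s.
Proof.
move=> runL y_opp y1_free.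
apply: survives_step (nondeg_of_col (run_start runL) y_opp) (rate_next_gt0 y1_free _).
by rewrite addrK.
Qed.

Lemma survives_spread k : forall s c L y, valid_config s -> edge_run 1 c s L 1 ->
  y \in col_set s (~~ c) -> {in sites s, forall x, x <= y + k%:Z} -> survives s.
Proof.
elim: k => [|k IH] s c L y vs runL y_opp below.
  have y1_free : y + 1 \notin col_set s (~~ c) by apply/negP => /col_set_sites /below; lia.
  apply: (survives_paint_right runL y_opp y1_free).
  exists (1 - ruin 1 - ruin 2); split; first by rewrite /ruin expr1 expr2; lra.
  move=> n; apply: (@surv_ge_ruin n _ _ _ _ (y + 1) 2 (valid_update _ _ vs)).
    exact: edge_run_paint_right runL (col_set_sites y_opp).
  split; first by rewrite sites_update => z /fset1UP [->|/below]; lia.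
  case=> [|[|//]] _; rewrite col_set_update eqxx; first by rewrite mul0r addr0 eqxx.
  have -> : y + 1 + 1%:Z * -1 = y by lia.
  by rewrite y_opp orbT.
case: (boolP (y + 1 \in col_set s (~~ c))) => [y1_opp|y1_free].
  by apply: (IH _ _ _ (y + 1) vs runL y1_opp) => x /below; lia.
apply: (survives_paint_right runL y_opp y1_free).
apply: (IH _ _ _ (y + 1) (valid_update _ _ vs)).
- exact: edge_run_paint_right runL (col_set_sites y_opp).
- by rewrite col_set_update !eqxx.
- by rewrite sites_update => z /fset1UP [->|/below]; lia.
Qed.

Theorem mainTheorem2 (R0 B0 : {fset int}) :
  R0 != fset0 -> B0 != fset0 -> R0 `&` B0 = fset0 ->
  exists c : rat, 0 < c /\ forall n : nat, c <= surv n (R0, B0).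
Proof.
move=> R0_ne0 B0_ne0 disjRB; pose s : config := (R0, B0).
have vs : valid_config s by apply/eqP.
have sites_ne0 : sites s != fset0 by rewrite fsetU_eq0 negb_and R0_ne0.
have [L L_site L_min] := fset_min sites_ne0.
have [U _ U_max] := fset_max sites_ne0.
pose c := L \in R0.
have L_col : L \in col_set s c.
  rewrite /col_set /c; case: ifP => // /negbT L_notin.
  by move: L_site; rewrite inE (negbTE L_notin).
have [y y_opp] : exists y, y \in col_set s (~~ c).
  by rewrite /c; case: (L \in R0); apply/fset0Pn.
apply: (survives_spread (k := `|U - y|%N) (L := L) vs _ y_opp).
  by split=> [x /L_min|[|//] _]; [lia | rewrite mul0r addr0].
by move=> x /U_max; lia.
Qed.
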